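(* Let $q$ be a prime power, $k \ge 2$, $n = (q^k-1)/(q-1)$, and let $\mathcal{C} \subseteq \mathbb{F}_q^n$ be the $q$-ary simplex code of dimension $k$. Then $$\mathbb{E}[\mathcal{C}] = k + \sum_{i=1}^{k} \frac{q^{i-1}-1}{q^k - q^{i-1}}.$$
   Context: The $q$-ary simplex code of dimension $k$ is the code generated by a $k \times n$ matrix whose columns are representatives of all nonzero vectors of $\mathbb{F}_q^k$ up to nonzero scalar multiples, one per class (so $n=(q^k-1)/(q-1)$). For a linear code $\mathcal{C}\subseteq\mathbb{F}_q^n$ of dimension $k$, $\mathbb{E}[\mathcal{C}]$ is defined as $\mathbb{E}[G]$ for any generator matrix $G\in\mathbb{F}_q^{k\times n}$ of $\mathcal{C}$ (this does not depend on the choice of $G$), where $\mathbb{E}[G]$ is the expected number of draws when columns of $G$ are drawn independently and uniformly at random from its $n$ columns (with repetition) until the drawn columns span $\mathbb{F}_q^k$. *)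

From HB Require Import structures.
From mathcomp Require Import all_boot all_order all_algebra.
From mathcomp Require Import all_classical all_reals all_analysis.
Set Implicit Arguments. Unset Strict Implicit. Unset Printing Implicit Defensive.
Import Order.TTheory GRing.Theory Num.Theory.
Local Open Scope ring_scope.

Definition spans_seq (F : fieldType) (k n : nat) (G : 'M[F]_(k, n))
  (s : seq 'I_n) : bool :=
  \rank (\sum_(j <- s) <<row j G^T>>)%MS == k.

Definition first_spans_at (F : fieldType) (k n t : nat) (G : 'M[F]_(k, n))
  (f : t.-tuple 'I_n) : bool :=
  spans_seq G f && [forall s : 'I_t, ~~ spans_seq G (take s f)].

(* P(T = t) where T is the number of uniform independent draws (with
   repetition) from the n columns until they span F^k. *)
Definition hit_prob (R : realType) (F : finFieldType) (k n t : nat)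
  (G : 'M[F]_(k, n)) : R :=
  (#|[set f : t.-tuple 'I_n | first_spans_at G f]|)%:R / (n ^ t)%:R.

(* G is a generator matrix of the q-ary simplex code of dimension k:
   its columns are nonzero and form a system of representatives of the
   nonzero vectors of F^k up to nonzero scalar multiples (one per class). *)
Definition simplex_generator (F : fieldType) (k n : nat) (G : 'M[F]_(k, n))
  : Prop :=
  (forall j : 'I_n, col j G != 0) /\
  (forall v : 'cV[F]_k, v != 0 ->
     exists! j : 'I_n, exists a : F, a != 0 /\ col j G = a *: v).

(* Let d_t be the rank of the first t drawn columns and T the first t with
   d_t = k.  A subspace of dimension d contains (q^d - 1)/(q - 1) of the n
   columns, so from rank d < k the rank increases at each draw with probability
   (q^k - q^d)/(q^k - 1).  Hence the potential
   phi(d) = \sum_(d <= i < k) (q^k - 1)/(q^k - q^i) drops by exactly 1 in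
   conditional expectation at each draw before T, so E[phi(d_t)] = phi(0) -
   \sum_(s < t) P(T > s) <= phi(0) P(T > t).  Therefore \sum_s P(T > s) = phi(0),
   which is the claimed value, and the decay of P(T > t) makes the partial
   sums of \sum_t t P(T = t) converge to it. *)

From HB Require Import structures.
From mathcomp Require Import all_boot all_order all_algebra.
From mathcomp Require Import all_classical all_reals all_analysis.
From mathcomp Require Import mxabelem ring lra zify.
Import Order.TTheory GRing.Theory Num.Theory.
Import numFieldNormedType.Exports.
Set Implicit Arguments. Unset Strict Implicit. Unset Printing Implicit Defensive.
Local Open Scope ring_scope.

Section SimplexColumns.
Variables (F : finFieldType) (k n : nat) (G : 'M[F]_(k, n)).
Hypothesis hG : simplex_generator G.

Definition column_vec (j : 'I_n) : 'rV[F]_k := row j G^T.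

Definition columns_in (A : 'M[F]_k) : {set 'I_n} :=
  [set j | (column_vec j <= A)%MS].

Lemma column_vec_neq0 j : column_vec j != 0.
Proof.
case: hG => nzG _; rewrite /column_vec -tr_col trmx_eq0; exact: nzG.
Qed.

Lemma column_vec_proportional j j' (a : F) :
  a != 0 -> column_vec j' = a *: column_vec j -> j' = j.
Proof.
move=> a0 ej'; case: hG => _ uniqG.
have [|j0 [_ j0_uniq]] := uniqG (column_vec j)^T; first by rewrite trmx_eq0 column_vec_neq0.
have -> : j = j0.
  by apply/esym/j0_uniq; exists 1; rewrite oner_eq0 scale1r /column_vec -tr_col trmxK.
apply/esym/j0_uniq; exists a; split=> //.
by rewrite -[col j' G]trmxK tr_col -/(column_vec j') ej' linearZ.
Qed.

(* Every nonzero vector of A is a unique nonzero multiple of a unique column in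
   A, so the pairs (column, nonzero scalar) count the nonzero vectors of A. *)
Lemma card_columns_in A :
  (#|columns_in A| * (#|F| - 1) = #|F| ^ \rank A - 1)%N.
Proof.
have card_units : #|[set a : F | a != 0]| = (#|F| - 1)%N.
  by rewrite subn1 -(cardsC1 (0 : F)); apply: eq_card => a; rewrite !inE.
have card_nz : #|[set v : 'rV[F]_k | (v <= A)%MS & v != 0]| = (#|F| ^ \rank A - 1)%N.
  rewrite -card_rowg (cardsD1 0 (rowg A)) inE sub0mx add1n subn1 /=.
  by apply: eq_card => v; rewrite !inE andbC.
pose scale_col (p : 'I_n * F) := p.2 *: column_vec p.1.
rewrite -card_units -cardsX -card_nz -(@card_in_imset _ _ scale_col).
  apply: eq_card => v; apply/imsetP/idP.
    case=> -[j a]; rewrite !inE /= => /andP [Aj a0] ->.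
    by rewrite scalemx_sub // scaler_eq0 negb_or a0 column_vec_neq0.
  rewrite inE => /andP [vA v0].
  have [|j [[a [a0 ej]] _]] := proj2 hG v^T; first by rewrite trmx_eq0.
  have ej' : column_vec j = a *: v by rewrite /column_vec -tr_col ej linearZ /= trmxK.
  exists (j, a^-1); first by rewrite !inE /= ej' scalemx_sub ?invr_eq0.
  by rewrite /scale_col /= ej' scalerA mulVf ?scale1r.
move=> [j a] [j' b]; rewrite !inE /= => /andP [_ a0] /andP [_ b0] /eqP.
rewrite /scale_col /= => eab.
have ej' : column_vec j' = (a / b) *: column_vec j.
  by rewrite mulrC -scalerA (eqP eab) scalerA mulVf ?scale1r.
have {ej'} ejj : j' = j by apply: column_vec_proportional ej'; rewrite mulf_neq0 ?invr_eq0.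
subst j'; move: eab; rewrite -subr_eq0 -scalerBl scaler_eq0 subr_eq0.
by rewrite (negPf (column_vec_neq0 j)) orbF => /eqP ->.
Qed.

Definition drawn_span (s : seq 'I_n) : 'M[F]_k := (\sum_(j <- s) <<column_vec j>>)%MS.

Definition drawn_rank (s : seq 'I_n) : nat := \rank (drawn_span s).

Lemma drawn_rank_nil : drawn_rank [::] = 0%N.
Proof. by rewrite /drawn_rank /drawn_span big_nil mxrank0. Qed.

Lemma drawn_rank_le s : (drawn_rank s <= k)%N.
Proof. exact: rank_leq_col. Qed.

Lemma drawn_rank_take i s : (drawn_rank (take i s) <= drawn_rank s)%N.
Proof.
apply: mxrankS; rewrite -{2}(cat_take_drop i s) /drawn_span big_cat /=.
exact: addsmxSl.
Qed.

Lemma drawn_rank_rcons s j :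
  drawn_rank (rcons s j) = (drawn_rank s + ~~ (column_vec j <= drawn_span s)%MS)%N.
Proof.
rewrite /drawn_rank /drawn_span big_rcons -/(drawn_span s).
case: (boolP (column_vec j <= drawn_span s)%MS) => [in_s | notin_s] /=.
  by rewrite addn0; apply/eqmx_rank/eqmxP/addsmx_idPl; rewrite genmxE.
apply/eqP; rewrite eqn_leq addn1; apply/andP; split.
  apply: leq_trans (mxrank_adds_leqif _ _).1 _.
  by rewrite mxrank_gen rank_rV column_vec_neq0 addn1.
apply: rank_ltmx; rewrite /ltmx addsmxSl /=; apply: contra notin_s => sub.
by apply: submx_trans sub; rewrite -(genmxE (column_vec j)) addsmxSr.
Qed.

Lemma first_spans_at_rcons t (g : t.-tuple 'I_n) j :
  first_spans_at G [tuple of rcons g j] =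
  (drawn_rank (rcons g j) == k) && (drawn_rank g < k)%N.
Proof.
rewrite /first_spans_at; congr andb; apply/forallP/idP => [spans | lt_k s].
  move: (spans ord_max); rewrite /spans_seq /= -cats1 takel_cat ?size_tuple //.
  by rewrite take_oversize ?size_tuple // ltn_neqAle drawn_rank_le andbT.
have s_le : (s <= size g)%N by rewrite size_tuple -ltnS.
rewrite /spans_seq /= -cats1 takel_cat //.
by rewrite neq_ltn (leq_ltn_trans (drawn_rank_take _ _) lt_k).
Qed.

End SimplexColumns.

Lemma big_tuple_rcons (R : nmodType) (T : finType) t (h : t.+1.-tuple T -> R) :
  \sum_(f : t.+1.-tuple T) h f =
  \sum_(g : t.-tuple T) \sum_(j : T) h [tuple of rcons g j].
Proof.
rewrite pair_big /=.
have rcons_bij : bijective (fun p : t.-tuple T * T => [tuple of rcons p.1 p.2]).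
  apply: inj_card_bij; last by rewrite card_prod !card_tuple expnS mulnC.
  move=> [g j] [g' j'] /(congr1 val) /= /eqP.
  by rewrite eqseq_rcons => /andP [/eqP /val_inj -> /eqP ->].
by rewrite (reindex _ (onW_bij _ rcons_bij)).
Qed.

Lemma big_tuple0 (R : nmodType) (T : finType) (h : 0.-tuple T -> R) :
  \sum_(f : 0.-tuple T) h f = h [tuple].
Proof.
rewrite (eq_bigr (fun=> h [tuple])) => [|f _]; last by rewrite tuple0.
by rewrite sumr_const card_tuple expn0.
Qed.

Lemma natr_card_set (R : nzSemiRingType) (T : finType) (P : pred T) :
  (#|[set x | P x]|%:R : R) = \sum_x (P x)%:R.
Proof.
rewrite -sum1_card natr_sum big_mkcond /=; apply: eq_bigr => x _.
by rewrite inE; case: (P x).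
Qed.

Section RankPotential.
Variables (R : realFieldType) (F : finFieldType) (k : nat).

Local Notation q := (#|F|%:R : R).

(* The mean number of draws needed to leave a subspace of dimension i, since
   a uniform column lies in it with probability (q^i - 1) / (q^k - 1). *)
Definition waiting_time (i : nat) : R := (q ^+ k - 1) / (q ^+ k - q ^+ i).

Definition rank_potential (d : nat) : R := \sum_(d <= i < k) waiting_time i.

Lemma card_field_gt1 : 1 < q.
Proof. by rewrite ltr1n card_finNzRing_gt1. Qed.

Lemma waiting_time_gt0 i : (i < k)%N -> 0 < waiting_time i.
Proof.
move=> ik; have q1 := card_field_gt1.
by rewrite divr_gt0 // subr_gt0 ?exprn_egt1 ?ltr_eXn2l // -lt0n (leq_ltn_trans _ ik).
Qed.

Lemma waiting_timeE i :
  (i < k)%N -> waiting_time i = 1 + (q ^+ i - 1) / (q ^+ k - q ^+ i).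
Proof.
move=> ik; have gap0 : q ^+ k - q ^+ i != 0.
  by rewrite subr_eq0 gt_eqF // ltr_eXn2l // card_field_gt1.
by rewrite /waiting_time -[q ^+ k - 1](subrKA (q ^+ i)) mulrDl divff.
Qed.

Lemma rank_potential_ge0 d : 0 <= rank_potential d.
Proof.
rewrite /rank_potential big_nat_cond; apply: sumr_ge0 => i /andP [/andP [_ ik] _].
exact/ltW/waiting_time_gt0.
Qed.

Lemma rank_potential_le d :
  (d <= k)%N -> rank_potential d <= rank_potential 0 * (d < k)%:R.
Proof.
move=> dk; case: ltnP => [_ | kd] /=.
  rewrite mulr1 /rank_potential (@big_cat_nat _ _ _ d 0 k) //= lerDr big_nat_cond.
  apply: sumr_ge0 => i /andP [/andP [_ lt_id] _].
  exact/ltW/waiting_time_gt0/(leq_trans lt_id).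
by rewrite mulr0 /rank_potential big_geq.
Qed.

Lemma rank_potentialS d :
  (d < k)%N -> rank_potential d = waiting_time d + rank_potential d.+1.
Proof. by move=> dk; rewrite /rank_potential big_ltn. Qed.

Lemma rank_potential0E :
  rank_potential 0 = k%:R + \sum_(1 <= i < k.+1) (q ^+ (i - 1) - 1) / (q ^+ k - q ^+ (i - 1)).
Proof.
rewrite big_add1 /= /rank_potential !big_mkord.
rewrite (eq_bigr (fun i : 'I_k => 1 + (q ^+ i - 1) / (q ^+ k - q ^+ i))).
  by rewrite big_split /= sumr_const card_ord; under [in RHS]eq_bigr do rewrite subn1.
by move=> i _; rewrite waiting_timeE.
Qed.

End RankPotential.

Section DrawRecurrences.
Variables (R : realFieldType) (F : finFieldType) (k n : nat) (G : 'M[F]_(k, n)).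
Hypothesis hG : simplex_generator G.

Local Notation q := (#|F|%:R : R).
Local Notation rank := (drawn_rank G).
Local Notation potential := (@rank_potential R F k).

Lemma natr_card_columns_in A :
  (#|columns_in G A|)%:R * (q - 1) = q ^+ \rank A - 1.
Proof.
have q_gt0 : (0 < #|F|)%N by rewrite (ltn_trans _ (card_finNzRing_gt1 F)).
have /(congr1 (fun m => m%:R : R)) := card_columns_in hG A.
by rewrite natrM !natrB ?expn_gt0 ?q_gt0 // natrX.
Qed.

Lemma natr_simplex_length : n%:R * (q - 1) = q ^+ k - 1.
Proof.
have := natr_card_columns_in 1%:M; rewrite mxrank1 /columns_in.
rewrite (_ : [set j | _] = [set: 'I_n]) ?cardsT ?card_ord //.
by apply/setP => j; rewrite !inE submx1.
Qed.

(* The draws that do not fall into the current span, a proportion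
   (q^k - q^d) / (q^k - 1) of all n columns, are those raising the rank. *)
Lemma waiting_time_columns s : (rank s < k)%N ->
  (n - #|columns_in G (drawn_span G s)|)%:R * waiting_time R F k (rank s) = n%:R.
Proof.
move=> lt_k; have q1 := card_field_gt1 R F.
set c := #|columns_in G _|; set d := rank s.
have c_le : (c <= n)%N by rewrite -[n]card_ord max_card.
have cE : c%:R * (q - 1) = q ^+ d - 1 := natr_card_columns_in _.
have nE := natr_simplex_length.
have gapE : (n - c)%:R * (q - 1) = q ^+ k - q ^+ d.
  by rewrite natrB // mulrBl nE cE; ring.
have q10 : q - 1 != 0 by rewrite subr_eq0 gt_eqF.
have gap0 : q ^+ k - q ^+ d != 0 by rewrite subr_eq0 gt_eqF // ltr_eXn2l.
rewrite /waiting_time -nE -gapE; field.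
by rewrite q10; apply: contra gap0; rewrite -gapE => /eqP ->; rewrite mul0r.
Qed.

Lemma sum_rank_potential_rcons s :
  \sum_(j < n) potential (rank (rcons s j)) =
  n%:R * potential (rank s) - n%:R * (rank s < k)%:R.
Proof.
have [lt_k | ge_k] := ltnP (rank s) k; last first.
  have full : rank s = k by apply/eqP; rewrite eqn_leq drawn_rank_le.
  rewrite mulr0 subr0 mulr_natl.
  transitivity (\sum_(j < n) potential (rank s)); last by rewrite sumr_const card_ord.
  apply: eq_bigr => j _; rewrite (drawn_rank_rcons hG) full.
  suff -> : (column_vec G j <= drawn_span G s)%MS by rewrite addn0.
  by apply: submx_full; rewrite /row_full -/(drawn_rank G s) full.
pose in_span j := (column_vec G j <= drawn_span G s)%MS.
have stepE j : potential (rank (rcons s j)) =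
    potential (rank s) - (~~ in_span j)%:R * waiting_time R F k (rank s).
  rewrite (drawn_rank_rcons hG) -/(in_span j); case: (in_span j) => /=.
    by rewrite addn0 mul0r subr0.
  by rewrite addn1 mul1r (rank_potentialS _ _ lt_k) addrC addKr.
under eq_bigr do rewrite stepE.
rewrite sumrB sumr_const card_ord -mulr_suml mulr1 mulr_natl.
congr (_ - _); rewrite -(waiting_time_columns lt_k); congr (_ * _).
rewrite -natr_card_set (cardsCs (columns_in _ _)) card_ord subKn; last first.
  by apply: leq_trans (max_card _) _; rewrite card_ord.
by congr _%:R; apply: eq_card => j; rewrite !inE.
Qed.

Lemma sum_rank_potential_tuple t :
  \sum_(f : t.+1.-tuple 'I_n) potential (rank f) =
  n%:R * \sum_(g : t.-tuple 'I_n) potential (rank g) -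
  n%:R * \sum_(g : t.-tuple 'I_n) (rank g < k)%:R.
Proof.
rewrite big_tuple_rcons !mulr_sumr -sumrB; apply: eq_bigr => g _.
exact: sum_rank_potential_rcons.
Qed.

Lemma sum_first_spans_tuple t :
  \sum_(f : t.+1.-tuple 'I_n) (first_spans_at G f)%:R +
  \sum_(f : t.+1.-tuple 'I_n) (rank f < k)%:R =
  n%:R * \sum_(g : t.-tuple 'I_n) (rank g < k)%:R :> R.
Proof.
rewrite !big_tuple_rcons -big_split mulr_sumr; apply: eq_bigr => g _.
rewrite -big_split /= [in RHS]mulr_natl.
transitivity (\sum_(j < n) ((rank g < k)%:R : R)); last by rewrite sumr_const card_ord.
apply: eq_bigr => j _; rewrite first_spans_at_rcons.
have := drawn_rank_le G (rcons g j); rewrite (drawn_rank_rcons hG).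
have [lt_k | ge_k] := ltnP (rank g) k => /= [|_].
  rewrite leq_eqVlt andbT => /orP [/eqP -> | lt_k']; first by rewrite eqxx ltnn addr0.
  by rewrite lt_k' ltn_eqF // add0r.
by rewrite andbF add0r ltnNge (leq_trans ge_k) ?leq_addr.
Qed.

End DrawRecurrences.

Lemma half_mul_succ_bound N : (N * N.+1 <= 4 * ((N - N./2) * (N./2).+1))%N.
Proof. by rewrite -{1 2 3}(odd_double_half N) -muln2; case: (odd N) => /=; nia. Qed.

Local Open Scope classical_set_scope.

Section MeanFromTail.
Variables (R : realType) (H Q : nat -> R) (P : R).
Hypothesis H0 : H 0 = 0.
Hypothesis HS : forall t, H t.+1 = Q t - Q t.+1.
Hypothesis H_ge0 : forall t, 0 <= H t.
Hypothesis Q_ge0 : forall t, 0 <= Q t.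
(* In the application H t = P(T = t), Q t = P(T > t) and P - \sum_(s < N) Q s
   is the expected remaining potential after N draws. *)
Hypothesis tail_sum : forall N, 0 <= P - \sum_(s < N) Q s <= P * Q N.

Lemma sum_mul_hitE N : \sum_(t < N.+1) t%:R * H t = \sum_(s < N) Q s - N%:R * Q N.
Proof.
elim: N => [|N IH]; first by rewrite big_ord1 big_ord0 H0 !mulr0 mul0r subr0.
by rewrite big_ord_recr /= IH HS big_ord_recr /= -natr1; ring.
Qed.

Lemma tail_le M N : (M <= N)%N -> Q N <= Q M.
Proof.
move/subnK <-; elim: (N - M)%N => [|m IH] //=; rewrite addSn.
by apply: le_trans IH; rewrite -subr_ge0 -HS.
Qed.

Lemma succ_mul_tail_le N : N.+1%:R * Q N <= P.
Proof.
have /andP [rest_ge0 _] := tail_sum N.+1.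
have : \sum_(s < N.+1) Q N <= \sum_(s < N.+1) Q s.
  by apply: ler_sum => s _; apply: tail_le; rewrite -ltnS.
by rewrite sumr_const card_ord -mulr_natl; lra.
Qed.

Lemma sub_mul_tail_le M N : (M <= N)%N -> (N - M)%:R * Q N <= P * Q M.
Proof.
move=> le_MN; have /andP [restN_ge0 _] := tail_sum N.
have /andP [_ restM_le] := tail_sum M.
have : \sum_(M <= s < N) Q N <= \sum_(M <= s < N) Q s.
  by rewrite !big_nat; apply: ler_sum => s /andP [_ /ltnW]; apply: tail_le.
have splitN : \sum_(s < N) Q s = \sum_(s < M) Q s + \sum_(M <= s < N) Q s.
  by rewrite -!(big_mkord xpredT) (big_cat_nat (leq0n M) le_MN).
by rewrite sumr_const_nat -mulr_natl; lra.
Qed.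

Lemma limit_ge0 : 0 <= P.
Proof. by have := tail_sum 0; rewrite big_ord0 subr0 => /andP []. Qed.

(* Halving argument: [sub_mul_tail_le] and [succ_mul_tail_le] at M = N./2. *)
Lemma mul_tail_le N : N%:R * Q N <= 4%:R * (P * P / N.+1%:R).
Proof.
set m := N./2; rewrite mulrA ler_pdivlMr // mulrAC -natrM.
have le_half : (N * N.+1)%:R <= 4%:R * ((N - m)%:R * m.+1%:R) :> R.
  by rewrite -!natrM ler_nat half_mul_succ_bound.
have le_sub : (N - m)%:R * Q N <= P * Q m.
  by apply: sub_mul_tail_le; rewrite leq_half_double; lia.
have le_succ := succ_mul_tail_le m.
have P_ge0 := limit_ge0.
have := ler_wpM2r (Q_ge0 N) le_half.
have := ler_wpM2l (ler0n R m.+1) le_sub.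
have := ler_wpM2l P_ge0 le_succ.
nra.
Qed.

Lemma limit_mul_tail_le N : P * Q N <= P * P / N.+1%:R.
Proof.
rewrite ler_pdivlMr // -mulrA ler_wpM2l ?limit_ge0 // mulrC.
exact: succ_mul_tail_le.
Qed.

Lemma cvg_sum_mul_hit :
  ((fun N : nat => \sum_(t < N) t%:R * H t) : R^nat) @ \oo --> P.
Proof.
rewrite -cvg_shiftS /=.
apply: (@squeeze_cvgr _ _ _ _ (fun N => P - 5%:R * (P * P) * harmonic N) (fun=> P)).
- near=> N; rewrite sum_mul_hitE -mulrA (_ : harmonic N = N.+1%:R^-1) //.
  have /andP [rest_ge0 rest_le] := tail_sum N.
  have NQ_ge0 := mulr_ge0 (ler0n R N) (Q_ge0 N).
  move: (mul_tail_le N) (limit_mul_tail_le N) rest_le NQ_ge0.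
  set a := P * P / _; set b := N%:R * Q N; set c := P * Q N.
  by move=> *; apply/andP; split; lra.
- suff : (fun N => P - 5%:R * (P * P) * harmonic N) @ \oo --> P - 5%:R * (P * P) * 0.
    by rewrite mulr0 subr0.
  by apply: cvgB; [exact: cvg_cst | apply: cvgM; [exact: cvg_cst | exact: cvg_harmonic]].
- exact: cvg_cst.
Unshelve. all: by end_near.
Qed.

End MeanFromTail.

Section SpanningTime.
Variables (R : realType) (F : finFieldType) (k n : nat) (G : 'M[F]_(k, n)).
Hypotheses (hG : simplex_generator G) (k_gt0 : (0 < k)%N).

Local Notation rank := (drawn_rank G).
Local Notation potential := (@rank_potential R F k).

Definition tail_prob t : R :=
  (\sum_(f : t.-tuple 'I_n) (rank f < k)%:R) / (n ^ t)%:R.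

Definition mean_potential t : R :=
  (\sum_(f : t.-tuple 'I_n) potential (rank f)) / (n ^ t)%:R.

Lemma natr_simplex_length_neq0 : n%:R != 0 :> R.
Proof.
apply/eqP => n0; have := natr_simplex_length R hG.
by rewrite n0 mul0r => /eqP; rewrite eq_sym subr_eq0 gt_eqF // exprn_egt1 ?card_field_gt1 // -lt0n.
Qed.

Lemma natr_exp_simplex_length_gt0 t : 0 < (n ^ t)%:R :> R.
Proof. by rewrite natrX exprn_gt0 // lt0r natr_simplex_length_neq0 /=. Qed.

Lemma hit_prob0 : hit_prob R 0 G = 0.
Proof.
rewrite /hit_prob natr_card_set big_tuple0 /first_spans_at /spans_seq.
by rewrite -/(drawn_span G [::]) -/(rank [::]) drawn_rank_nil eq_sym gtn_eqF ?mul0r.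
Qed.

Lemma hit_probS t : hit_prob R t.+1 G = tail_prob t - tail_prob t.+1.
Proof.
have := sum_first_spans_tuple R hG t.
rewrite /hit_prob /tail_prob natr_card_set => /(canRL (addrK _)) ->.
have nt0 := lt0r_neq0 (natr_exp_simplex_length_gt0 t).
by rewrite expnS natrM; field; rewrite nt0 natr_simplex_length_neq0.
Qed.

Lemma mean_potentialS t : mean_potential t.+1 = mean_potential t - tail_prob t.
Proof.
rewrite /mean_potential /tail_prob (sum_rank_potential_tuple R hG).
have nt0 := lt0r_neq0 (natr_exp_simplex_length_gt0 t).
by rewrite expnS natrM; field; rewrite nt0 natr_simplex_length_neq0.
Qed.

Lemma mean_potentialE t : mean_potential t = potential 0 - \sum_(s < t) tail_prob s.
Proof.
elim: t => [|t IH].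
  by rewrite /mean_potential big_tuple0 drawn_rank_nil big_ord0 expn0 divr1 subr0.
by rewrite mean_potentialS IH big_ord_recr /= opprD addrA.
Qed.

Lemma tail_prob_ge0 t : 0 <= tail_prob t.
Proof. by rewrite divr_ge0 // sumr_ge0. Qed.

Lemma hit_prob_ge0 t : 0 <= hit_prob R t G.
Proof. by rewrite divr_ge0. Qed.

Lemma mean_potential_ge0 t : 0 <= mean_potential t.
Proof. by rewrite divr_ge0 // sumr_ge0 // => f _; apply: rank_potential_ge0. Qed.

Lemma mean_potential_le t : mean_potential t <= potential 0 * tail_prob t.
Proof.
rewrite /mean_potential /tail_prob mulrA ler_pM2r ?invr_gt0 ?natr_exp_simplex_length_gt0 //.
by rewrite mulr_sumr; apply: ler_sum => f _; apply/rank_potential_le/drawn_rank_le.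
Qed.

End SpanningTime.

Theorem mainTheorem2 (R : realType) (F : finFieldType) (q k : nat)
  (hq : #|F| = q) (hk : (2 <= k)%N)
  (G : 'M[F]_(k, (q ^ k - 1) %/ (q - 1)))
  (hG : simplex_generator G) :
  ((fun N : nat => \sum_(t < N) (t%:R * hit_prob R t G)) : R^nat) @ \oo -->
    (k%:R + \sum_(1 <= i < k.+1)
       ((q%:R ^+ (i - 1) - 1) / (q%:R ^+ k - q%:R ^+ (i - 1))) : R).
Proof.
subst q; have k_gt0 : (0 < k)%N by apply: leq_trans hk.
rewrite -rank_potential0E.
apply: (cvg_sum_mul_hit (hit_prob0 R G k_gt0) (hit_probS R hG k_gt0)
  (hit_prob_ge0 R G) (tail_prob_ge0 R G)) => N.
by rewrite -(mean_potentialE R hG k_gt0) mean_potential_ge0 mean_potential_le.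
Qed.
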